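(* Let $(R,\mathfrak{m})$ be a commutative Artinian local ring with identity and $\mathfrak{m}\neq 0$. Every polynomial of positive degree in $R[x]$ that is not a unit of $R[x]$ can be written as a product of (finitely many) irreducible polynomials of $R[x]$.
   Context: A nonunit polynomial $f\in R[x]$ is irreducible if $f=gh$ with $g,h\in R[x]$ implies $g$ or $h$ is a unit of $R[x]$. *)

From HB Require Import structures.
From mathcomp Require Import all_boot all_order all_algebra.
Set Implicit Arguments. Unset Strict Implicit. Unset Printing Implicit Defensive.
Import GRing.Theory.
Local Open Scope ring_scope.

Definition is_ideal (R : comNzRingType) (I : R -> Prop) : Prop :=
  [/\ I 0, (forall x y, I x -> I y -> I (x + y)) & (forall a x, I x -> I (a * x))].

Definition is_maximal_ideal (R : comNzRingType) (I : R -> Prop) : Prop :=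
  [/\ is_ideal I, ~ I 1 &
      forall J : R -> Prop, is_ideal J -> (forall x, I x -> J x) ->
        J 1 \/ (forall x, J x -> I x)].

Definition local_with (R : comNzRingType) (m : R -> Prop) : Prop :=
  is_maximal_ideal m /\
  forall J : R -> Prop, is_maximal_ideal J -> forall x, J x <-> m x.

Definition artinian (R : comNzRingType) : Prop :=
  forall I : nat -> R -> Prop,
    (forall n, is_ideal (I n)) ->
    (forall n x, I n.+1 x -> I n x) ->
    exists N, forall n, (N <= n)%N -> forall x, I n x <-> I N x.

Definition unit_polyR (R : comNzRingType) (f : {poly R}) : Prop :=
  exists g : {poly R}, f * g = 1.

Definition irreducible_pol (R : comNzRingType) (f : {poly R}) : Prop :=
  ~ unit_polyR f /\
  forall g h : {poly R}, f = g * h -> unit_polyR g \/ unit_polyR h.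

(* In an Artinian local ring (R, m), elements outside m are units and elements
   of m are nilpotent, so a polynomial whose reduction modulo m is a nonzero
   constant is a unit of R[x].  If f had no factorization into irreducibles,
   it would split off nonunit factors forever: f = f_n * k_(n-1) * ... * k_0.
   The content ideals of the partial products k_0 * ... * k_(n-1) decrease,
   hence stabilize, and Nakayama's lemma then forbids a factor k_n with all
   coefficients in m.  So from some N on every k_n has positive reduced degree
   (the degree of its image in (R/m)[x]), and f_N = f_(N+j) * Q_j with the
   reduced degree of Q_j at least j.  But a nonzero polynomial times Q_j is
   longer than that reduced degree, which for j = size f_N forces f = 0. *)

From HB Require Import structures.
From Stdlib Require Import Classical IndefiniteDescription.
From mathcomp Require Import all_boot all_order all_algebra ring.
Set Implicit Arguments.
Unset Strict Implicit.
Unset Printing Implicit Defensive.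
Import GRing.Theory.
Local Open Scope ring_scope.

Section Ideal.
Variables (R : comNzRingType) (I : R -> Prop).
Hypothesis idealI : is_ideal I.

Lemma ideal_mem0 : I 0.
Proof. by case: idealI. Qed.

Lemma ideal_memD (x y : R) : I x -> I y -> I (x + y).
Proof. by case: idealI => _ + _; apply. Qed.

Lemma ideal_memMl (a x : R) : I x -> I (a * x).
Proof. by case: idealI => _ _; apply. Qed.

Lemma ideal_memMr (a x : R) : I x -> I (x * a).
Proof. by rewrite mulrC; apply: ideal_memMl. Qed.

Lemma ideal_memN (x : R) : I x -> I (- x).
Proof. by rewrite -mulN1r; apply: ideal_memMl. Qed.

Lemma ideal_mem_sum (J : finType) (P : pred J) (F : J -> R) :
  (forall i, P i -> I (F i)) -> I (\sum_(i | P i) F i).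
Proof. by move=> IF; elim/big_ind: _ => //; [exact: ideal_mem0 | exact: ideal_memD]. Qed.

Lemma ideal_notmemDr (x y : R) : ~ I x -> I y -> ~ I (x + y).
Proof.
move=> Ix Iy IxDy; apply: Ix; rewrite -(addrK y x).
by apply: ideal_memD; last exact: ideal_memN.
Qed.

End Ideal.

Section MaximalIdeal.
Variables (R : comNzRingType) (m : R -> Prop).
Hypothesis maxm : is_maximal_ideal m.

Lemma max_ideal_ideal : is_ideal m.
Proof. by case: maxm. Qed.

Lemma max_ideal_not1 : ~ m 1.
Proof. by case: maxm. Qed.

Lemma max_ideal_prime (a b : R) : m (a * b) -> m a \/ m b.
Proof.
move=> mab; have [ma|nma] := classic (m a); [by left | right].
have [c [d [mc e1]]] : exists c d, m c /\ 1 = c + d * a.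
  pose J r := exists c d, m c /\ r = c + d * a.
  have idealJ : is_ideal J.
    split.
    - by exists 0, 0; rewrite mul0r addr0; split; first exact: ideal_mem0 max_ideal_ideal.
    - move=> _ _ [c [d [mc ->]]] [c' [d' [mc' ->]]]; exists (c + c'), (d + d').
      by rewrite mulrDl addrACA; split; first exact: ideal_memD max_ideal_ideal _ _ mc mc'.
    - move=> r _ [c [d [mc ->]]]; exists (r * c), (r * d).
      by rewrite mulrDr mulrA; split; first exact: ideal_memMl max_ideal_ideal _ _ mc.
  case: maxm => _ _ /(_ J idealJ) [x mx | // | Jm].
    by exists x, 0; rewrite mul0r addr0.
  case: nma; apply: Jm; exists 0, 1; rewrite add0r mul1r.
  by split; first exact: ideal_mem0 max_ideal_ideal.
rewrite -[b]mul1r e1 mulrDl -mulrA; apply: (ideal_memD max_ideal_ideal).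
  exact: (ideal_memMr max_ideal_ideal).
exact: (ideal_memMl max_ideal_ideal).
Qed.

End MaximalIdeal.

Definition principal (R : comNzRingType) (s x : R) := exists a, x = a * s.

Definition min_principal (R : comNzRingType) (s : R) :=
  s != 0 /\ forall r, r * s != 0 -> principal (r * s) s.

Lemma principal_ideal (R : comNzRingType) (s : R) : is_ideal (principal s).
Proof.
split.
- by exists 0; rewrite mul0r.
- by move=> _ _ [a ->] [b ->]; exists (a + b); rewrite mulrDl.
- by move=> c _ [a ->]; exists (c * a); rewrite mulrA.
Qed.

Lemma ann_min_principal_maximal (R : comNzRingType) (s : R) :
  min_principal s -> is_maximal_ideal (fun r => r * s = 0).
Proof.
move=> [s0 mins]; split.
- split; first by rewrite mul0r.
  + by move=> x y; rewrite mulrDl => -> ->; rewrite addr0.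
  + by move=> c x; rewrite -mulrA => ->; rewrite mulr0.
- by rewrite mul1r; apply/eqP.
- move=> J idealJ annJ.
  have [[x [Jx /eqP xs0]] | noJ] := classic (exists x, J x /\ x * s <> 0).
    left; have [b eb] := mins x xs0.
    have J1bx : J (1 - b * x) by apply: annJ; rewrite mulrBl mul1r -mulrA -eb subrr.
    by rewrite -(subrK (b * x) 1); apply: ideal_memD idealJ _ _ J1bx (ideal_memMl idealJ _ Jx).
  by right => x Jx; apply: NNPP => xs0; apply: noJ; exists x.
Qed.

Section Artinian.
Variables (R : comNzRingType).
Hypothesis artR : artinian R.

Lemma artinian_principal_chain (s : nat -> R) :
  (forall n, principal (s n) (s n.+1)) -> exists N a, s N = a * s N.+1.
Proof.
move=> sS; pose I n := principal (s n).
have decrI n x : I n.+1 x -> I n x.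
  by move=> [a ->]; have [c ->] := sS n; exists (a * c); rewrite mulrA.
have [N stabI] := artR (fun n => principal_ideal (s n)) decrI.
have [a ea] := (stabI N.+1 (leqnSn N) (s N)).2 (ex_intro _ 1 (esym (mul1r _))).
by exists N, a.
Qed.

Lemma pow_principal_stable (z : R) : exists n y, z ^+ n = y * z ^+ n.+1.
Proof.
by apply: artinian_principal_chain => n; exists z; rewrite exprSr mulrC.
Qed.

Lemma exists_min_principal (s0 : R) : s0 != 0 -> exists2 s, principal s0 s & min_principal s.
Proof.
move=> s00; apply: NNPP => nomin.
pose P s := principal s0 s /\ s != 0.
have shrink s : exists r, P s -> r * s != 0 /\ ~ principal (r * s) s.
  have [[Ps0 s0'] | nPs] := classic (P s); last by exists 0.
  apply: NNPP => nr; apply: nomin; exists s => //; split => // r rs0.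
  by apply: NNPP => nrs; apply: nr; exists r.
have [F HF] := functional_choice _ shrink.
pose sq n := iter n (fun s => F s * s) s0.
have Psq n : P (sq n).
  elim: n => [|n IH]; first by split => //; exists 1; rewrite mul1r.
  have [Fs0 _] := HF _ IH; split => //.
  by case: IH => [[a ea] _]; exists (F (sq n) * a); rewrite /= ea mulrA.
have sqS n : principal (sq n) (sq n.+1) by exists (F (sq n)).
have [N [a ea]] := artinian_principal_chain sqS.
by have [_] := HF _ (Psq N); apply; exists a.
Qed.

End Artinian.

Section ArtinianLocal.
Variables (R : comNzRingType) (m : R -> Prop).
Hypotheses (artR : artinian R) (locm : local_with m).
Let maxm := locm.1.
Let idealm := max_ideal_ideal maxm.

(* The annihilator of a minimal principal ideal is maximal, hence it is [m]. *)
Lemma notin_max_regular (w s : R) : ~ m w -> w * s = 0 -> s = 0.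
Proof.
move=> mw ws0; apply: NNPP => /eqP s0.
have [_ [a ->] mins] := exists_min_principal artR s0.
apply: mw; apply: ((locm.2 _ (ann_min_principal_maximal mins) w).1).
by rewrite mulrCA ws0 mulr0.
Qed.

Lemma notin_max_unit (z : R) : ~ m z -> exists y, y * z = 1.
Proof.
move=> mz; have [n [y e]] := pow_principal_stable artR z.
exists y; apply/esym/subr0_eq; apply: (@notin_max_regular (z ^+ n)).
  elim: n {e} => [|n IH]; first exact: max_ideal_not1 maxm.
  by rewrite exprS => /(max_ideal_prime maxm) [].
by rewrite mulrBr mulr1 {1}e exprSr; ring.
Qed.

Lemma in_max_nilpotent (x : R) : m x -> exists n, x ^+ n = 0.
Proof.
move=> mx; have [n [y e]] := pow_principal_stable artR x.
exists n; apply: (@notin_max_regular (1 - y * x)).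
  apply: (ideal_notmemDr idealm (max_ideal_not1 maxm)).
  by rewrite -mulNr; apply: (ideal_memMl idealm).
by rewrite mulrBl mul1r {1}e exprSr; ring.
Qed.

End ArtinianLocal.

Lemma unit_polyRM (R : comNzRingType) (g h : {poly R}) :
  unit_polyR g -> unit_polyR h -> unit_polyR (g * h).
Proof. by move=> [g' gg'] [h' hh']; exists (g' * h'); rewrite mulrACA gg' hh' mulr1. Qed.

Lemma unit_polyR1Dnil (R : comNzRingType) (b : {poly R}) n :
  b ^+ n = 0 -> unit_polyR (1 + b).
Proof.
move=> bn0; exists (\sum_(i < n) (- b) ^+ i).
have := subrX1 (- b) n; rewrite exprNn bn0 mulr0 sub0r => geom.
have -> : 1 + b = - (- b - 1) by rewrite opprB opprK.
by rewrite mulNr -geom opprK.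
Qed.

(* The image of [k] in [(R/m)[x]] has degree [d]. *)
Definition reduced_deg (R : comNzRingType) (m : R -> Prop) (k : {poly R}) d :=
  ~ m k`_d /\ forall j, (d < j)%N -> m k`_j.

Section MaximalIdealPoly.
Variables (R : comNzRingType) (m : R -> Prop).
Hypothesis maxm : is_maximal_ideal m.
Let idealm := max_ideal_ideal maxm.

Lemma reduced_degM (g h : {poly R}) a b :
  reduced_deg m g a -> reduced_deg m h b -> reduced_deg m (g * h) (a + b).
Proof.
move=> [ga gm] [hb hm]; split.
  rewrite coefM (bigD1 (Ordinal (ltn_addr b (ltnSn a)))) //= addKn.
  apply: (ideal_notmemDr idealm); first by move/(max_ideal_prime maxm) => [].
  apply: (ideal_mem_sum idealm) => j /negbTE ja.
  case: (ltngtP j a) => [jlta | altj | jeqa].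
  - by apply: (ideal_memMl idealm); apply: hm; rewrite ltn_subRL ltn_add2r.
  - by apply: (ideal_memMr idealm); apply: gm.
  - by move: ja; rewrite -val_eqE /= jeqa eqxx.
move=> j abj; rewrite coefM; apply: (ideal_mem_sum idealm) => i _.
have [alti | ilea] := ltnP a i; first by apply: (ideal_memMr idealm); apply: gm.
apply: (ideal_memMl idealm); apply: hm.
by rewrite ltn_subRL (leq_ltn_trans _ abj) // leq_add2r.
Qed.

Lemma reduced_deg_or_in_max (k : {poly R}) :
  (forall i, m k`_i) \/ exists d, reduced_deg m k d.
Proof.
suff top n : (forall j, (n <= j)%N -> m k`_j) ->
    (forall i, m k`_i) \/ exists d, reduced_deg m k d.
  by apply: (top (size k)) => j kj; rewrite nth_default //; apply: ideal_mem0 idealm.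
elim: n => [|n IH] mtop; first by left => i; apply: mtop.
have [mkn | nmkn] := classic (m k`_n); last by right; exists n.
by apply: IH => j; rewrite leq_eqVlt => /orP [/eqP <- // | ]; apply: mtop.
Qed.

End MaximalIdealPoly.

Section ArtinianLocalPoly.
Variables (R : comNzRingType) (m : R -> Prop).
Hypotheses (artR : artinian R) (locm : local_with m).
Let maxm := locm.1.
Let idealm := max_ideal_ideal maxm.

Lemma unit_polyR_reduced_deg0 (p : {poly R}) : reduced_deg m p 0 -> unit_polyR p.
Proof.
elim: {p}(size p) {-2}p (leqnn (size p)) => [|n IH] p sizep [p0 pm].
  move: sizep; rewrite leqn0 size_poly_eq0 => /eqP p_eq0.
  by case: p0; rewrite p_eq0 coef0; apply: ideal_mem0 idealm.
have [size1 | size_gt1] := leqP (size p) 1.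
  have [y yp0] := notin_max_unit artR locm p0.
  by exists y%:P; rewrite {1}(size1_polyC size1) -polyCM mulrC yp0.
set k := (size p).-1; set q := \poly_(i < k) p`_i; set a := p`_k.
have sizepE : size p = k.+1 by rewrite /k prednK // (ltn_trans _ size_gt1).
have k_gt0 : (0 < k)%N by rewrite -ltnS -sizepE.
have pE : p = q + a%:P * 'X^k.
  apply/polyP => i; rewrite coefD coefCM coefXn coef_poly.
  case: (ltngtP i k) => [ilt | klt | ->]; rewrite ?mulr0 ?addr0 ?mulr1 ?add0r //.
  by rewrite nth_default // sizepE.
have [q' qq'] : unit_polyR q.
  apply: IH; first by rewrite (leq_trans (size_poly _ _)) // -ltnS -sizepE.
  split; first by rewrite coef_poly k_gt0.
  move=> i i_gt0; rewrite coef_poly; case: ifP => _; first exact: pm.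
  exact: ideal_mem0 idealm.
have [M aM] := in_max_nilpotent artR locm (pm k k_gt0).
have -> : p = q * (1 + q' * (a%:P * 'X^k)) by rewrite pE mulrDr mulr1 mulrA qq' mul1r.
apply: unit_polyRM; first by exists q'.
by apply: (@unit_polyR1Dnil _ _ M); rewrite !exprMn -rmorphXn aM rmorph0 mul0r mulr0.
Qed.

Lemma reduced_deg_gt0 (k : {poly R}) d :
  ~ unit_polyR k -> reduced_deg m k d -> (0 < d)%N.
Proof.
rewrite lt0n => nuk kd; apply/eqP => d0.
by apply: nuk; apply: unit_polyR_reduced_deg0; rewrite -d0.
Qed.

End ArtinianLocalPoly.

(* [coef_span S g] is the ideal [S * c(g)], where [c(g)] is the content ideal
   generated by the coefficients of [g]. *)
Definition coef_span (R : comNzRingType) (S : R -> Prop) (g : {poly R}) (r : R) :=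
  exists a : nat -> R, (forall j, S (a j)) /\ r = \sum_(j < size g) a j * g`_j.

Definition content (R : comNzRingType) (g : {poly R}) := coef_span (fun _ => True) g.

Section CoefSpan.
Variables (R : comNzRingType) (S : R -> Prop).
Hypothesis idealS : is_ideal S.

Lemma coef_span_ideal (g : {poly R}) : is_ideal (coef_span S g).
Proof.
split.
- exists (fun _ => 0); split; first by move=> _; exact: ideal_mem0 idealS.
  by rewrite big1 // => j _; rewrite mul0r.
- move=> _ _ [a [Sa ->]] [b [Sb ->]]; exists (fun j => a j + b j); split.
    by move=> j; apply: ideal_memD idealS _ _ (Sa j) (Sb j).
  by rewrite -big_split; apply: eq_bigr => j _; rewrite mulrDl.
- move=> c _ [a [Sa ->]]; exists (fun j => c * a j); split.
    by move=> j; apply: ideal_memMl idealS _ _ (Sa j).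
  by rewrite mulr_sumr; apply: eq_bigr => j _; rewrite mulrA.
Qed.

Lemma coef_span_coef (g : {poly R}) i x : S x -> coef_span S g (g`_i * x).
Proof.
move=> Sx; have [ilt | ige] := ltnP i (size g); last first.
  by rewrite nth_default // mul0r; apply: ideal_mem0 (coef_span_ideal g).
exists (fun j => if j == i then x else 0); split.
  by move=> j; case: ifP => _ //; apply: ideal_mem0 idealS.
rewrite (bigD1 (Ordinal ilt)) //= eqxx big1 ?addr0 1?mulrC // => j ji.
by rewrite ifF ?mul0r //; apply/negbTE.
Qed.

End CoefSpan.

Lemma coef_span_sub (R : comNzRingType) (S T : R -> Prop) (g : {poly R}) r :
  is_ideal T -> (forall i, T g`_i) -> coef_span S g r -> T r.
Proof.
move=> idealT Tg [a [_ ->]].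
by apply: (ideal_mem_sum idealT) => j _; apply: (ideal_memMl idealT).
Qed.

Lemma ideal_coefM (R : comNzRingType) (T : R -> Prop) (g k : {poly R}) i :
  is_ideal T -> (forall l j, T (g`_l * k`_j)) -> T (g * k)`_i.
Proof. by move=> idealT Tgk; rewrite coefM; apply: (ideal_mem_sum idealT). Qed.

Lemma content_ideal (R : comNzRingType) (g : {poly R}) : is_ideal (content g).
Proof. exact: coef_span_ideal. Qed.

Lemma contentM_sub (R : comNzRingType) (g k : {poly R}) r :
  content (g * k) r -> content g r.
Proof.
apply: coef_span_sub; first exact: content_ideal.
move=> i; apply: ideal_coefM; first exact: content_ideal.
by move=> l j; apply: coef_span_coef.
Qed.

Lemma contentM_coef_span (R : comNzRingType) (S : R -> Prop) (g k : {poly R}) r :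
  is_ideal S -> (forall j, S k`_j) -> content (g * k) r -> coef_span S g r.
Proof.
move=> idealS Sk; apply: coef_span_sub; first exact: coef_span_ideal.
move=> i; apply: ideal_coefM; first exact: coef_span_ideal.
by move=> l j; apply: coef_span_coef.
Qed.

Section Nakayama.
Variables (R : comNzRingType) (m : R -> Prop).
Hypotheses (artR : artinian R) (locm : local_with m).
Let maxm := locm.1.
Let idealm := max_ideal_ideal maxm.

Lemma nakayama_family n (v : nat -> R) :
  (forall i, (i < n)%N -> exists a : nat -> R,
     (forall j, m (a j)) /\ v i = \sum_(j < n) a j * v j) ->
  forall i, (i < n)%N -> v i = 0.
Proof.
elim: n v => [|n IH] v vspan i // ilt.
have [a [ma ea]] := vspan n (ltnSn n).
rewrite big_ord_recr /= in ea.
have [u ua] : exists u, u * (1 - a n) = 1.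
  apply: (notin_max_unit artR locm).
  by apply: (ideal_notmemDr idealm (max_ideal_not1 maxm)); apply: (ideal_memN idealm).
have vnE : v n = \sum_(j < n) (u * a j) * v j.
  rewrite -[v n]mul1r -ua -mulrA mulrBl mul1r {1}ea addrK mulr_sumr.
  by apply: eq_bigr => j _; rewrite mulrA.
have vlt_eq0 : forall i, (i < n)%N -> v i = 0.
  apply: IH => i0 i0lt; have [b [mb eb]] := vspan i0 (ltnW i0lt).
  exists (fun j => b j + b n * (u * a j)); split.
    by move=> j; apply: (ideal_memD idealm (mb j)); do 2 apply: (ideal_memMl idealm).
  rewrite eb big_ord_recr /= vnE mulr_sumr -big_split /=.
  by apply: eq_bigr => j _; rewrite mulrDl mulrA.
move: ilt; rewrite ltnS leq_eqVlt => /orP [/eqP -> | ]; last exact: vlt_eq0.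
by rewrite vnE big1 // => j _; rewrite vlt_eq0 // mulr0.
Qed.

Lemma nakayama_poly (g : {poly R}) : (forall i, coef_span m g g`_i) -> g = 0.
Proof.
move=> gspan; apply/polyP => i; rewrite coef0.
have [ilt | ige] := ltnP i (size g); last by rewrite nth_default.
by apply: (@nakayama_family (size g) (fun j => g`_j)) => // j _; apply: gspan.
Qed.

(* Comparing the coefficients of [g * Q] of index [b + D] from the top down,
   each coefficient [g`_b] lies in [m * c(g)]. *)
Lemma reduced_deg_lt_sizeM (g Q : {poly R}) D :
  g != 0 -> reduced_deg m Q D -> (D < size (g * Q)%R)%N.
Proof.
move=> g0 [QD Qm]; rewrite ltnNge; apply/negP => sizegQ; move/eqP: g0; apply.
have idealg := coef_span_ideal idealm g.
apply: nakayama_poly => a.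
suff gspan t b : (size g <= b + t)%N -> coef_span m g g`_b.
  by apply: (gspan (size g)); rewrite leq_addl.
elim: t b => [|t IH] b sizeg.
  by rewrite addn0 in sizeg; rewrite nth_default //; apply: (ideal_mem0 idealg).
have gQ0 : (g * Q)`_(b + D) = 0 by rewrite nth_default // (leq_trans sizegQ) // leq_addl.
rewrite coefM (bigD1 (Ordinal (leq_addr D b : (b < (b + D).+1)%N))) //= addKn in gQ0.
set rest := \sum_(i < _ | _) _ in gQ0.
have rest_span : coef_span m g rest.
  apply: (ideal_mem_sum idealg) => j /negbTE jb.
  case: (ltngtP j b) => [jltb | bltj | jeqb].
  - by apply: (coef_span_coef idealm); apply: Qm; rewrite ltn_subRL ltn_add2r.
  - rewrite mulrC; apply: (ideal_memMl idealg); apply: IH.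
    by rewrite (leq_trans sizeg) // addnS -addSn leq_add2r.
  - by move: jb; rewrite -val_eqE /= jeqb eqxx.
have [u uQD] := notin_max_unit artR locm QD.
have -> : g`_b = u * - rest.
  rewrite -[g`_b]mul1r -uQD -mulrA; congr (_ * _).
  by apply/eqP; rewrite -addr_eq0 mulrC gQ0.
by apply: (ideal_memMl idealg); apply: (ideal_memN idealg).
Qed.

End Nakayama.

Section Factorization.
Variables (R : comNzRingType) (m : R -> Prop).
Hypotheses (artR : artinian R) (locm : local_with m).
Let maxm := locm.1.

Lemma no_infinite_factor_chain (fs ks : nat -> {poly R}) :
  fs 0%N != 0 -> (forall n, fs n = fs n.+1 * ks n) ->
  (forall n, ~ unit_polyR (ks n)) -> False.
Proof.
move=> fs00 fsS nuk.
pose P n := \prod_(i < n) ks i.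
have fs0E n : fs 0%N = fs n * P n.
  elim: n => [|n IH]; first by rewrite /P big_ord0 mulr1.
  by rewrite /P big_ord_recr /= IH fsS -mulrA [ks n * _]mulrC.
have PS n : P n.+1 = P n * ks n by rewrite /P big_ord_recr.
have decr_content n x : content (P n.+1) x -> content (P n) x.
  by rewrite PS; apply: contentM_sub.
have [N stab] := artR (fun n => content_ideal (P n)) decr_content.
have ks_deg n : (N <= n)%N -> exists2 d, (0 < d)%N & reduced_deg m (ks n) d.
  move=> Nn; have [mks | [d ksd]] := reduced_deg_or_in_max maxm (ks n).
    exfalso; move: fs00; rewrite (fs0E n) (_ : P n = 0) ?mulr0 ?eqxx //.
    apply: (nakayama_poly artR locm) => i; apply: (contentM_coef_span (max_ideal_ideal maxm) mks).
    rewrite -PS; apply/(stab _ (leqW Nn)); apply/(stab _ Nn).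
    by rewrite -[_`_i]mulr1; apply: coef_span_coef.
  by exists d => //; apply: (reduced_deg_gt0 artR locm (nuk n) ksd).
have cofactor j : exists Q D,
    [/\ (j <= D)%N, reduced_deg m Q D & fs N = fs (N + j)%N * Q].
  elim: j => [|j [Q [D [jD QD fsNE]]]].
    exists 1, 0%N; split => //; last by rewrite addn0 mulr1.
    split; first by rewrite coefC; apply: max_ideal_not1 maxm.
    by move=> j j_gt0; rewrite coefC gtn_eqF //; apply: ideal_mem0 (max_ideal_ideal maxm).
  have [d d_gt0 ksd] := ks_deg (N + j)%N (leq_addr _ _).
  exists (ks (N + j)%N * Q), (d + D)%N; split; first by rewrite -add1n leq_add.
    exact: (reduced_degM maxm ksd QD).
  by rewrite fsNE fsS addnS mulrA.
have [Q [D [sizeD QD fsNE]]] := cofactor (size (fs N)).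
have fsN0 : fs N != 0 by apply: contra fs00; rewrite (fs0E N) => /eqP ->; rewrite mul0r.
have [fsNj0 | fsNj0] := eqVneq (fs (N + size (fs N))%N) 0.
  by move: fsN0; rewrite fsNE fsNj0 mul0r eqxx.
have := reduced_deg_lt_sizeM artR locm fsNj0 QD.
by rewrite -fsNE ltnNge (leq_trans _ sizeD).
Qed.

End Factorization.

Definition factorable (R : comNzRingType) (f : {poly R}) :=
  exists s : seq {poly R},
    (forall g, g \in s -> irreducible_pol g) /\ f = \prod_(g <- s) g.

Lemma factorableM (R : comNzRingType) (g h : {poly R}) :
  factorable g -> factorable h -> factorable (g * h).
Proof.
move=> [s1 [irr1 ->]] [s2 [irr2 ->]]; exists (s1 ++ s2); split; last by rewrite big_cat.
by move=> x; rewrite mem_cat => /orP []; [apply: irr1 | apply: irr2].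
Qed.

Lemma nonfactorable_split (R : comNzRingType) (f : {poly R}) :
  ~ factorable f -> ~ unit_polyR f ->
  exists g h, [/\ f = g * h, ~ factorable g, ~ unit_polyR g & ~ unit_polyR h].
Proof.
move=> nff nuf.
have [g [h [fE nug nuh]]] : exists g h, [/\ f = g * h, ~ unit_polyR g & ~ unit_polyR h].
  apply: NNPP => nsplit; apply: nff; exists [:: f]; split; last by rewrite big_seq1.
  move=> f1; rewrite mem_seq1 => /eqP ->; split => // g h fE.
  apply: NNPP => nunits; apply: nsplit; exists g, h.
  by split => // ?; apply: nunits; [left | right].
have [fg | nfg] := classic (factorable g); last by exists g, h.
exists h, g; split => //; first by rewrite mulrC.
by move=> fh; apply: nff; rewrite fE; apply: factorableM.
Qed.

Lemma nonfactorable_chain (R : comNzRingType) (f : {poly R}) :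
  ~ factorable f -> ~ unit_polyR f ->
  exists fs ks : nat -> {poly R}, [/\ fs 0%N = f,
    forall n, fs n = fs n.+1 * ks n & forall n, ~ unit_polyR (ks n)].
Proof.
move=> nff nuf; pose bad (p : {poly R}) := ~ factorable p /\ ~ unit_polyR p.
have split_bad (p : {poly R}) : exists gh : {poly R} * {poly R}, bad p ->
    [/\ p = gh.1 * gh.2, bad gh.1 & ~ unit_polyR gh.2].
  have [[nfp nup] | good] := classic (bad p); last by exists (0, 0).
  by have [g [h [pE nfg nug nuh]]] := nonfactorable_split nfp nup; exists (g, h).
have [G HG] := functional_choice _ split_bad.
pose fs n := iter n (fun p => (G p).1) f.
have bad_fs n : bad (fs n) by elim: n => [|n IH]; [split | have [] := HG _ IH].
by exists fs, (fun n => (G (fs n)).2); split=> // n; have [] := HG _ (bad_fs n).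
Qed.

Theorem proposition3p1 (R : comNzRingType) (m : R -> Prop)
  (hA : artinian R) (hloc : local_with m) (hm0 : exists x : R, m x /\ x != 0)
  (f : {poly R}) (hdeg : (1 < size f)%N) (hnu : ~ unit_polyR f) :
  exists s : seq {poly R},
    (forall g, g \in s -> irreducible_pol g) /\ f = \prod_(g <- s) g.
Proof.
apply: NNPP => nff; have [fs [ks [fs0 fsS nuk]]] := nonfactorable_chain nff hnu.
have f0 : fs 0%N != 0 by rewrite fs0 -size_poly_gt0 (ltn_trans _ hdeg).
exact: (no_infinite_factor_chain hA hloc f0 fsS nuk).
Qed.
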